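(* Let $F(V)$ be the set of formulas of $\mathrm{q}\L^{*}$, $\sim$ the relation $p\sim q$ iff $\vdash p\leftrightarrow q$, and $[p]_\sim$ the class of $p$. On $[F(V)]_\sim$ define $-[p]_\sim:=[\neg p]_\sim$, $[p]_\sim\oplus[q]_\sim:=[\neg p\to q]_\sim$, $[0]_\sim:=[p\to p]_\sim$ (for any $p$), and let $[1]_\sim$ be the class of the constant $1$. Then $\langle [F(V)]_\sim;\oplus,-,[0]_\sim,[1]_\sim\rangle$ is an MV*-algebra.
   Context: Let $V=\{p_1,p_2,\ldots\}$ be a set of propositional variables and $F(V)$ the set of formulas built from $V$ and the constant $1$ with the binary connective $\to$ and the unary connectives $\neg$, ${}^{+}$, ${}^{-}$ (postfix ${}^+,{}^-$ bind tighter than $\neg$, which binds tighter than $\to$). Abbreviations: $p\vee q:=((p^{+}\to q^{+})^{+}\to(\neg p)^{-})\to((q^{-}\to p^{-})^{-}\to p^{-})$; an axiom written $A\leftrightarrow B$ stands for the two axioms $A\to B$ and $B\to A$, and $\vdash A\leftrightarrow B$ means $\vdash A\to B$ and $\vdash B\to A$. Axiom schemas of $\mathrm{q}\L^{*}$ (for all formulas $p,q,r$): (Q1) $(p\to q)\leftrightarrow(\neg q\to\neg p)$; (Q2) $1\leftrightarrow((1\to p)\to 1)$; (Q3) $p\leftrightarrow((q\to q)\to p)$; (Q4) $(p\to q)\leftrightarrow((q^{+}\to p^{-})\to(p^{+}\to q^{-}))$; (Q5) $\neg(p\to q)\leftrightarrow(q\to p)$; (Q6) $(p\to(\neg p\to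 q))^{+}\leftrightarrow(p^{+}\to(\neg p^{+}\to q^{+}))$; (Q7) $(p\to(q\vee r))\leftrightarrow((p\to r)\vee(p\to q))$; (Q8) $(p\vee(q\vee r))\leftrightarrow((p\vee q)\vee r)$; (Q9) $((p\to 1)\to((q\to 1)\to r))\to((q\to 1)\to((p\to 1)\to r))$; (Q10) $p\to 1$; (Q11) $((1\to 1)\to p^{+})\leftrightarrow((p\to 1)\to 1)$ and $((1\to 1)\to p^{-})\leftrightarrow((p\to\neg 1)\to\neg 1)$. Deduction rules: (R1) from $p$ and $p\to q$ infer $(r\to r)\to q$; (R2) from $(r\to r)\to(p\to q)$ infer $p\to q$; (R3) from $p\to q$ and $r\to t$ infer $(q\to r)\to(p\to t)$. $\vdash q$ means $q$ is derivable from the axioms by the rules. ($\sim$ is a congruence, so the operations are well defined.) An MV*-algebra is an algebra $\langle B;\oplus,-,0,1\rangle$ of type $\langle2,1,0,0\rangle$ such that for all $x,y,z\in B$: (MV*1) $x\oplus y=y\oplus x$; (MV*2) $(1\oplus x)\oplus(y\oplus(1\oplus z))=((1\oplus x)\oplus y)\oplus(1\oplus z)$; (MV*3) $x\oplus(-x)=0$; (MV*4) $(x\oplus 1)\oplus 1=1$; (MV*5) $x\oplus 0=x$; (MV*6) $-(x\oplus y)=(-x)\oplus(-y)$; (MV*7) $-(-x)=x$; (MV*8) $x\oplus y=(x^{+}\oplus y^{+})\oplus(x^{-}\oplus y^{-})$; (MV*9) $(-x\oplus(x\oplus y))^{+}=-(x^{+})\oplus(x^{+}\oplus y^{+})$;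 (MV*10) $x\vee y=y\vee x$; (MV*11) $x\vee(y\vee z)=(x\vee y)\vee z$; (MV*12) $x\oplus(y\vee z)=(x\oplus y)\vee(x\oplus z)$; where $x^{+}:=1\oplus(-1\oplus x)$, $x^{-}:=-1\oplus(1\oplus x)$ and $x\vee y:=(x^{+}\oplus(-x^{+}\oplus y^{+})^{+})\oplus(x^{-}\oplus(-x^{-}\oplus y^{-})^{+})$. *)

From Stdlib Require Import ClassicalEpsilon.

(* Formulas of qL*: variables p_1, p_2, ... are [Var 0], [Var 1], ... *)
Inductive form : Type :=
| Var : nat -> form
| One : form
| Imp : form -> form -> form
| Neg : form -> form
| Pl  : form -> form
| Mi  : form -> form.

Definition Or (p q : form) : form :=
  Imp (Imp (Pl (Imp (Pl p) (Pl q))) (Mi (Neg p)))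
      (Imp (Mi (Imp (Mi q) (Mi p))) (Mi p)).

(* Derivability in qL*: axioms Q1-Q11 (each A <-> B as the two axioms A -> B
   and B -> A) closed under rules R1-R3. *)
Inductive prov : form -> Prop :=
| Q1a p q : prov (Imp (Imp p q) (Imp (Neg q) (Neg p)))
| Q1b p q : prov (Imp (Imp (Neg q) (Neg p)) (Imp p q))
| Q2a p : prov (Imp One (Imp (Imp One p) One))
| Q2b p : prov (Imp (Imp (Imp One p) One) One)
| Q3a p q : prov (Imp p (Imp (Imp q q) p))
| Q3b p q : prov (Imp (Imp (Imp q q) p) p)
| Q4a p q : prov (Imp (Imp p q) (Imp (Imp (Pl q) (Mi p)) (Imp (Pl p) (Mi q))))
| Q4b p q : prov (Imp (Imp (Imp (Pl q) (Mi p)) (Imp (Pl p) (Mi q))) (Imp p q))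
| Q5a p q : prov (Imp (Neg (Imp p q)) (Imp q p))
| Q5b p q : prov (Imp (Imp q p) (Neg (Imp p q)))
| Q6a p q : prov (Imp (Pl (Imp p (Imp (Neg p) q)))
                      (Imp (Pl p) (Imp (Neg (Pl p)) (Pl q))))
| Q6b p q : prov (Imp (Imp (Pl p) (Imp (Neg (Pl p)) (Pl q)))
                      (Pl (Imp p (Imp (Neg p) q))))
| Q7a p q r : prov (Imp (Imp p (Or q r)) (Or (Imp p r) (Imp p q)))
| Q7b p q r : prov (Imp (Or (Imp p r) (Imp p q)) (Imp p (Or q r)))
| Q8a p q r : prov (Imp (Or p (Or q r)) (Or (Or p q) r))
| Q8b p q r : prov (Imp (Or (Or p q) r) (Or p (Or q r)))
| Q9 p q r : prov (Imp (Imp (Imp p One) (Imp (Imp q One) r))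
                       (Imp (Imp q One) (Imp (Imp p One) r)))
| Q10 p : prov (Imp p One)
| Q11a p : prov (Imp (Imp (Imp One One) (Pl p)) (Imp (Imp p One) One))
| Q11b p : prov (Imp (Imp (Imp p One) One) (Imp (Imp One One) (Pl p)))
| Q11c p : prov (Imp (Imp (Imp One One) (Mi p))
                     (Imp (Imp p (Neg One)) (Neg One)))
| Q11d p : prov (Imp (Imp (Imp p (Neg One)) (Neg One))
                     (Imp (Imp One One) (Mi p)))
| R1 p q r : prov p -> prov (Imp p q) -> prov (Imp (Imp r r) q)
| R2 p q r : prov (Imp (Imp r r) (Imp p q)) -> prov (Imp p q)
| R3 p q r t : prov (Imp p q) -> prov (Imp r t) ->
               prov (Imp (Imp q r) (Imp p t)).

Definition equiv (p q : form) : Prop := prov (Imp p q) /\ prov (Imp q p).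

Definition Quot : Type := { S : form -> Prop | exists p, S = equiv p }.

Definition cls (p : form) : Quot := exist _ (equiv p) (ex_intro _ p eq_refl).

Definition rep (x : Quot) : form :=
  proj1_sig (constructive_indefinite_description _ (proj2_sig x)).

Definition qneg (x : Quot) : Quot := cls (Neg (rep x)).
Definition qplus (x y : Quot) : Quot := cls (Imp (Neg (rep x)) (rep y)).
(* [0]_~ := [p -> p]; we take p = p_1 (independence of the choice is part of
   what ~ being a congruence/ Q3 gives; any choice is allowed by the paper). *)
Definition qzero : Quot := cls (Imp (Var 0) (Var 0)).
Definition qone : Quot := cls One.

Section MVStar.
Variables (B : Type) (add : B -> B -> B) (opp : B -> B) (zero one : B).
Definition mvpos (x : B) : B := add one (add (opp one) x).
Definition mvneg (x : B) : B := add (opp one) (add one x).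
Definition mvjoin (x y : B) : B :=
  add (add (mvpos x) (mvpos (add (opp (mvpos x)) (mvpos y))))
      (add (mvneg x) (mvpos (add (opp (mvneg x)) (mvneg y)))).

Definition is_MVstar : Prop :=
  (forall x y, add x y = add y x) /\
  (forall x y z, add (add one x) (add y (add one z))
                 = add (add (add one x) y) (add one z)) /\
  (forall x, add x (opp x) = zero) /\
  (forall x, add (add x one) one = one) /\
  (forall x, add x zero = x) /\
  (forall x y, opp (add x y) = add (opp x) (opp y)) /\
  (forall x, opp (opp x) = x) /\
  (forall x y, add x y = add (add (mvpos x) (mvpos y)) (add (mvneg x) (mvneg y))) /\
  (forall x y, mvpos (add (opp x) (add x y))
               = add (opp (mvpos x)) (add (mvpos x) (mvpos y))) /\
  (forall x y, mvjoin x y = mvjoin y x) /\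
  (forall x y z, mvjoin x (mvjoin y z) = mvjoin (mvjoin x y) z) /\
  (forall x y z, add x (mvjoin y z) = mvjoin (add x y) (add x z)).
End MVStar.

(* The connectives of qL* respect ~ (for ⁺ and ⁻ because Q11 expresses them
   through →, ¬ and 1), so every axiom pair Q1-Q11 becomes an equation between
   classes.  The MV* axioms are then equational consequences for x ⊕ y = ¬x → y:
   ¬ is an involution by Q3 and Q5, MV*1 and MV*6 are contraposition (Q1, Q5),
   MV*2 is the exchange law Q9, MV*8 is Q4, MV*9 is Q6, and the MV* join unfolds
   to the abbreviation p ∨ q, so MV*10-12 come from Q7 (with p = 0 for
   commutativity) and Q8. *)

From Stdlib Require Import ClassicalEpsilon FunctionalExtensionality PropExtensionality ProofIrrelevance.

Section QLIdentities.

Variables (B : Type) (imp : B -> B -> B) (neg pl mi : B -> B) (zero one : B).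

Let add x y := imp (neg x) y.
Let vee x y :=
  imp (imp (pl (imp (pl x) (pl y))) (mi (neg x))) (imp (mi (imp (mi y) (mi x))) (mi x)).

Hypothesis imp_diag : forall x, imp x x = zero.
Hypothesis imp_contra : forall x y, imp x y = imp (neg y) (neg x).
Hypothesis imp_imp_one_one : forall x, imp (imp one x) one = one.
Hypothesis imp_zero_l : forall x, imp zero x = x.
Hypothesis imp_pl_mi : forall x y, imp x y = imp (imp (pl y) (mi x)) (imp (pl x) (mi y)).
Hypothesis neg_imp : forall x y, neg (imp x y) = imp y x.
Hypothesis pl_imp_neg : forall x y,
  pl (imp x (imp (neg x) y)) = imp (pl x) (imp (neg (pl x)) (pl y)).
Hypothesis imp_vee : forall x y z, imp x (vee y z) = vee (imp x z) (imp x y).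
Hypothesis veeA : forall x y z, vee x (vee y z) = vee (vee x y) z.
Hypothesis imp_one_exchange : forall x y z,
  imp (imp x one) (imp (imp y one) z) = imp (imp y one) (imp (imp x one) z).
Hypothesis pl_def : forall x, pl x = imp (imp x one) one.
Hypothesis mi_def : forall x, mi x = imp (imp x (neg one)) (neg one).

Lemma neg_def x : neg x = imp x zero.
Proof. now rewrite <- neg_imp, imp_zero_l. Qed.

Lemma negK x : neg (neg x) = x.
Proof. now rewrite (neg_def x), neg_imp, imp_zero_l. Qed.

Lemma imp_addE x y : imp x y = add (neg x) y.
Proof. unfold add. now rewrite negK. Qed.

Lemma addC x y : add x y = add y x.
Proof. unfold add. now rewrite imp_contra, negK. Qed.

Lemma neg_add x y : neg (add x y) = add (neg x) (neg y).
Proof. unfold add. now rewrite neg_imp, imp_contra. Qed.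

Lemma add0 x : add x zero = x.
Proof. unfold add. now rewrite <- neg_def, negK. Qed.

Lemma addN x : add x (neg x) = zero.
Proof. apply imp_diag. Qed.

Lemma add_one_one x : add (add x one) one = one.
Proof. unfold add. now rewrite neg_imp, imp_imp_one_one. Qed.

Lemma mvpos_pl x : mvpos B add neg one x = pl x.
Proof.
  rewrite pl_def. unfold mvpos, add.
  now rewrite negK, (imp_contra (neg one)), neg_imp, negK.
Qed.

Lemma mvneg_mi x : mvneg B add neg one x = mi x.
Proof. rewrite mi_def. unfold mvneg, add. now rewrite negK, (imp_contra one), neg_imp. Qed.

Lemma pl_neg x : pl (neg x) = neg (mi x).
Proof. rewrite <- mvpos_pl, <- mvneg_mi. unfold mvpos, mvneg. now rewrite !neg_add, negK. Qed.

Lemma mi_neg x : mi (neg x) = neg (pl x).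
Proof. rewrite <- (negK x) at 2. now rewrite pl_neg, negK. Qed.

Lemma mvjoin_vee x y : mvjoin B add neg one x y = vee x y.
Proof.
  unfold mvjoin. rewrite !mvpos_pl, !mvneg_mi. unfold vee, add.
  rewrite !negK, neg_imp, mi_neg, (imp_contra (neg (mi x))), <- (mi_neg (imp _ _)).
  now rewrite neg_imp, negK.
Qed.

Lemma vee_comm x y : vee x y = vee y x.
Proof. now rewrite <- (imp_zero_l (vee x y)), imp_vee, !imp_zero_l. Qed.

Lemma neg_imp_imp x y z : neg (imp x (imp y (neg z))) = add x (add y z).
Proof. now rewrite (imp_addE y), (imp_addE x), !neg_add, !negK. Qed.

Lemma add_one_exchange x y z :
  add (add x one) (add (add y one) z) = add (add y one) (add (add x one) z).
Proof.
  pose proof (f_equal neg (imp_one_exchange (neg x) (neg y) (neg z))) as H.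
  now rewrite !neg_imp_imp in H.
Qed.

Lemma add_one_assoc x y z :
  add (add one x) (add y (add one z)) = add (add (add one x) y) (add one z).
Proof.
  rewrite (addC one x), (addC one z), (addC y), add_one_exchange.
  apply addC.
Qed.

Lemma add_decomp x y :
  add x y = add (add (pl x) (pl y)) (add (mi x) (mi y)).
Proof.
  unfold add at 1 2.
  now rewrite (imp_pl_mi (neg x) y), mi_neg, pl_neg, <- (neg_imp (neg (pl x))).
Qed.

Lemma pl_add_neg_add x y :
  pl (add (neg x) (add x y)) = add (neg (pl x)) (add (pl x) (pl y)).
Proof. unfold add. rewrite !negK. apply pl_imp_neg. Qed.

Lemma add_vee x y z : add x (vee y z) = vee (add x y) (add x z).
Proof. unfold add at 1. now rewrite imp_vee, vee_comm. Qed.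

Theorem is_MVstar_of_qL_identities : is_MVstar B add neg zero one.
Proof.
  repeat split; intros; rewrite ?mvjoin_vee, ?mvpos_pl, ?mvneg_mi.
  all: auto using addC, add_one_assoc, addN, add_one_one, add0, neg_add, negK,
    add_decomp, pl_add_neg_add, vee_comm, veeA, add_vee.
Qed.

End QLIdentities.

Lemma prov_mp a b c : prov a -> prov (Imp a (Imp b c)) -> prov (Imp b c).
Proof. intros Ha Habc. exact (R2 _ _ One (R1 _ _ One Ha Habc)). Qed.

(* Q9 with p = q = 1 is reflexivity behind two guards 1 -> 1; Q3 and R3 strip one guard. *)
Lemma prov_unguard p :
  prov (Imp (Imp (Imp One One) p) (Imp (Imp One One) p)) -> prov (Imp p p).
Proof. intro H. exact (prov_mp _ _ _ H (R3 _ _ _ _ (Q3a p One) (Q3b p One))). Qed.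

Lemma prov_refl p : prov (Imp p p).
Proof. apply prov_unguard, prov_unguard, (Q9 One One p). Qed.

Lemma prov_trans a b c : prov (Imp a b) -> prov (Imp b c) -> prov (Imp a c).
Proof. intros Hab Hbc. exact (prov_mp _ _ _ Hbc (R3 _ _ _ _ Hab (prov_refl c))). Qed.

Lemma prov_guard p q : prov p -> prov (Imp (Imp q q) p).
Proof. intro H. exact (prov_mp _ _ _ H (Q3a p q)). Qed.

Lemma equiv_refl p : equiv p p.
Proof. split; apply prov_refl. Qed.

Lemma equiv_sym p q : equiv p q -> equiv q p.
Proof. intros [H1 H2]. now split. Qed.

Lemma equiv_trans p q r : equiv p q -> equiv q r -> equiv p r.
Proof. intros [Hpq Hqp] [Hqr Hrq]. split; eapply prov_trans; eassumption. Qed.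

Lemma equiv_imp a a' b b' : equiv a a' -> equiv b b' -> equiv (Imp a b) (Imp a' b').
Proof. intros [Ha Ha'] [Hb Hb']. split; apply R3; assumption. Qed.

Lemma equiv_neg a b : equiv a b -> equiv (Neg a) (Neg b).
Proof.
  intros [Hab Hba].
  split; [exact (prov_mp _ _ _ Hba (Q1a b a)) | exact (prov_mp _ _ _ Hab (Q1a a b))].
Qed.

Lemma equiv_pl_imp_one p : equiv (Pl p) (Imp (Imp p One) One).
Proof.
  apply equiv_trans with (Imp (Imp One One) (Pl p)).
  - split; [apply Q3a | apply Q3b].
  - split; [apply Q11a | apply Q11b].
Qed.

Lemma equiv_mi_imp_neg_one p : equiv (Mi p) (Imp (Imp p (Neg One)) (Neg One)).
Proof.
  apply equiv_trans with (Imp (Imp One One) (Mi p)).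
  - split; [apply Q3a | apply Q3b].
  - split; [apply Q11c | apply Q11d].
Qed.

Lemma equiv_pl a b : equiv a b -> equiv (Pl a) (Pl b).
Proof.
  intro H. eapply equiv_trans; [apply equiv_pl_imp_one |].
  eapply equiv_trans; [| apply equiv_sym, equiv_pl_imp_one].
  auto using equiv_imp, equiv_refl.
Qed.

Lemma equiv_mi a b : equiv a b -> equiv (Mi a) (Mi b).
Proof.
  intro H. eapply equiv_trans; [apply equiv_mi_imp_neg_one |].
  eapply equiv_trans; [| apply equiv_sym, equiv_mi_imp_neg_one].
  auto using equiv_imp, equiv_refl.
Qed.

Lemma cls_eq a b : equiv a b -> cls a = cls b.
Proof.
  intro Hab. apply subset_eq_compat.
  apply functional_extensionality; intro c. apply propositional_extensionality.
  split; intro H; eapply equiv_trans; eauto using equiv_sym.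
Qed.

Lemma cls_rep x : cls (rep x) = x.
Proof.
  unfold rep. destruct (constructive_indefinite_description _ _) as [p Hp].
  destruct x as [S HS]. simpl in *. apply subset_eq_compat. now symmetry.
Qed.

Lemma rep_cls p : equiv (rep (cls p)) p.
Proof.
  unfold rep. destruct (constructive_indefinite_description _ _) as [q Hq].
  simpl in Hq. pose proof (equiv_refl p) as H. rewrite Hq in H. exact H.
Qed.

Lemma Quot_ind (P : Quot -> Prop) : (forall p, P (cls p)) -> forall x, P x.
Proof. intros H x. rewrite <- (cls_rep x). apply H. Qed.

Definition qimp (x y : Quot) : Quot := cls (Imp (rep x) (rep y)).
Definition qpl (x : Quot) : Quot := cls (Pl (rep x)).
Definition qmi (x : Quot) : Quot := cls (Mi (rep x)).

Lemma qimp_cls a b : qimp (cls a) (cls b) = cls (Imp a b).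
Proof. apply cls_eq, equiv_imp; apply rep_cls. Qed.

Lemma qneg_cls a : qneg (cls a) = cls (Neg a).
Proof. apply cls_eq, equiv_neg, rep_cls. Qed.

Lemma qpl_cls a : qpl (cls a) = cls (Pl a).
Proof. apply cls_eq, equiv_pl, rep_cls. Qed.

Lemma qmi_cls a : qmi (cls a) = cls (Mi a).
Proof. apply cls_eq, equiv_mi, rep_cls. Qed.

Lemma qplus_cls a b : qplus (cls a) (cls b) = cls (Imp (Neg a) b).
Proof. apply cls_eq, equiv_imp; [apply equiv_neg |]; apply rep_cls. Qed.

#[local] Hint Rewrite qimp_cls qneg_cls qpl_cls qmi_cls qplus_cls : cls.

Definition qvee (x y : Quot) : Quot :=
  qimp (qimp (qpl (qimp (qpl x) (qpl y))) (qmi (qneg x)))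
       (qimp (qmi (qimp (qmi y) (qmi x))) (qmi x)).

Lemma qvee_cls a b : qvee (cls a) (cls b) = cls (Or a b).
Proof. unfold qvee. now autorewrite with cls. Qed.

#[local] Hint Rewrite qvee_cls : cls.

Ltac lift_to_formulas :=
  intros; repeat match goal with x : Quot |- _ => induction x using Quot_ind end;
  unfold qzero, qone; autorewrite with cls; apply cls_eq.

Lemma qplus_qimp x y : qplus x y = qimp (qneg x) y.
Proof. lift_to_formulas. apply equiv_refl. Qed.

Lemma qimp_diag x : qimp x x = qzero.
Proof. lift_to_formulas. split; apply prov_guard, prov_refl. Qed.

Lemma qimp_contra x y : qimp x y = qimp (qneg y) (qneg x).
Proof. lift_to_formulas. split; [apply Q1a | apply Q1b]. Qed.

Lemma qimp_imp_one_one x : qimp (qimp qone x) qone = qone.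
Proof. lift_to_formulas. split; [apply Q2b | apply Q2a]. Qed.

Lemma qimp_zero_l x : qimp qzero x = x.
Proof. lift_to_formulas. split; [apply Q3b | apply Q3a]. Qed.

Lemma qimp_pl_mi x y : qimp x y = qimp (qimp (qpl y) (qmi x)) (qimp (qpl x) (qmi y)).
Proof. lift_to_formulas. split; [apply Q4a | apply Q4b]. Qed.

Lemma qneg_imp x y : qneg (qimp x y) = qimp y x.
Proof. lift_to_formulas. split; [apply Q5a | apply Q5b]. Qed.

Lemma qpl_imp_neg x y :
  qpl (qimp x (qimp (qneg x) y)) = qimp (qpl x) (qimp (qneg (qpl x)) (qpl y)).
Proof. lift_to_formulas. split; [apply Q6a | apply Q6b]. Qed.

Lemma qimp_vee x y z : qimp x (qvee y z) = qvee (qimp x z) (qimp x y).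
Proof. lift_to_formulas. split; [apply Q7a | apply Q7b]. Qed.

Lemma qveeA x y z : qvee x (qvee y z) = qvee (qvee x y) z.
Proof. lift_to_formulas. split; [apply Q8a | apply Q8b]. Qed.

Lemma qimp_one_exchange x y z :
  qimp (qimp x qone) (qimp (qimp y qone) z) = qimp (qimp y qone) (qimp (qimp x qone) z).
Proof. lift_to_formulas. split; apply Q9. Qed.

Lemma qpl_def x : qpl x = qimp (qimp x qone) qone.
Proof. lift_to_formulas. apply equiv_pl_imp_one. Qed.

Lemma qmi_def x : qmi x = qimp (qimp x (qneg qone)) (qneg qone).
Proof. lift_to_formulas. apply equiv_mi_imp_neg_one. Qed.

Theorem proposition5p4 : is_MVstar Quot qplus qneg qzero qone.
Proof.
  replace qplus with (fun x y => qimp (qneg x) y).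
  - exact (is_MVstar_of_qL_identities Quot qimp qneg qpl qmi qzero qone
      qimp_diag qimp_contra qimp_imp_one_one qimp_zero_l qimp_pl_mi qneg_imp
      qpl_imp_neg qimp_vee qveeA qimp_one_exchange qpl_def qmi_def).
  - do 2 (apply functional_extensionality; intro). symmetry. apply qplus_qimp.
Qed.
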